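(* For all $\varepsilon,\varepsilon'\in\mathbb R$ the Lie algebras $\mathfrak g_\varepsilon$ and $\mathfrak g_{\varepsilon'}$ are isomorphic, but the metric Lie algebras $(\mathfrak g_\varepsilon,\langle\cdot,\cdot\rangle)$ and $(\mathfrak g_{\varepsilon'},\langle\cdot,\cdot\rangle)$ are isometrically isomorphic (i.e. there is a Lie algebra isomorphism preserving the inner products) if and only if $\varepsilon=\varepsilon'$.
   Context: For $\varepsilon\in\mathbb R$, $\mathfrak g_\varepsilon$ is the Lie algebra with basis $e_1,\dots,e_7$ and nonzero brackets $[e_1,e_5]=\tfrac12e_1$, $[e_2,e_5]=-\tfrac12e_2$, $[e_2,e_6]=-\tfrac12e_1$, $[e_3,e_5]=2e_3$, $[e_3,e_7]=-\tfrac12e_1$, $[e_4,e_5]=-e_2$, $[e_4,e_6]=-e_1$, $[e_5,e_6]=-\varepsilon e_2-2e_4-e_6$, $[e_5,e_7]=-\varepsilon e_3+\tfrac32e_7$, $[e_6,e_7]=-\sqrt2e_2$. With dual basis $e^i$, $\langle\cdot,\cdot\rangle=2(e^1\cdot e^5+e^2\cdot e^6+e^3\cdot e^7)-(e^4)^2$, an inner product of signature $(4,3)$ on $\mathfrak g_\varepsilon$. *)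

From mathcomp Require Import all_boot all_order all_algebra.
From mathcomp Require Import reals.
Set Implicit Arguments. Unset Strict Implicit. Unset Printing Implicit Defensive.
Import Order.TTheory GRing.Theory Num.Theory.
Local Open Scope ring_scope.

Section LieDefs.
Variable R : realType.

(* Vectors of g_eps are row vectors of length 7; the basis vector e_{k+1}
   is [ebase k] (indices shifted by one: e1 <-> 0, ..., e7 <-> 6). *)
Definition vec := 'rV[R]_7.
Definition ebase (k : 'I_7) : vec := delta_mx 0 k.
Definition eb (k : nat) : vec := ebase (inord k).

(* Brackets [e_{i+1}, e_{j+1}] for i < j (0-based indices). *)
Definition cpos (eps : R) (i j : nat) : vec :=
  match i, j with
  | 0, 4 => (1/2) *: eb 0
  | 1, 4 => - (1/2) *: eb 1
  | 1, 5 => - (1/2) *: eb 0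
  | 2, 4 => 2 *: eb 2
  | 2, 6 => - (1/2) *: eb 0
  | 3, 4 => - eb 1
  | 3, 5 => - eb 0
  | 4, 5 => - (eps *: eb 1) - 2 *: eb 3 - eb 5
  | 4, 6 => - (eps *: eb 2) + (3/2) *: eb 6
  | 5, 6 => - (Num.sqrt 2 *: eb 1)
  | _, _ => 0
  end.

Definition sconst (eps : R) (i j : 'I_7) : vec :=
  if (i < j)%N then cpos eps i j
  else if (j < i)%N then - cpos eps j i else 0.

Definition lieb (eps : R) (x y : vec) : vec :=
  \sum_(i < 7) \sum_(j < 7) (x 0 i * y 0 j) *: sconst eps i j.

(* <.,.> = 2(e^1.e^5 + e^2.e^6 + e^3.e^7) - (e^4)^2, with the symmetric
   product e^a.e^b = (e^a (x) e^b + e^b (x) e^a)/2. *)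
Definition ip (x y : vec) : R :=
  let c k := (x 0 (inord k) * y 0 (inord k))%R in
  let s a b := (x 0 (inord a) * y 0 (inord b) + x 0 (inord b) * y 0 (inord a))%R in
  s 0 4 + s 1 5 + s 2 6 - c 3.

Definition lie_iso_mx (eps eps' : R) (A : 'M[R]_7) : Prop :=
  A \in unitmx /\
  forall x y : vec, lieb eps' (x *m A) (y *m A) = lieb eps x y *m A.

Definition lie_isomorphic (eps eps' : R) : Prop :=
  exists A : 'M[R]_7, lie_iso_mx eps eps' A.

Definition metric_lie_isomorphic (eps eps' : R) : Prop :=
  exists A : 'M[R]_7, lie_iso_mx eps eps' A /\
    forall x y : vec, ip (x *m A) (y *m A) = ip x y.

End LieDefs.

(* The shear e6 |-> e6 + c e2, e7 |-> e7 + d e3 changes the e2- and e3-components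
   of ad(e5) on e6 and e7, and suitable c, d turn eps into eps'; it is not an
   isometry.  Conversely, an isometric isomorphism phi is rigid: evaluating
   "phi preserves brackets and inner products" on pairs of basis vectors, one
   coordinate at a time, forces phi(e1) = e1, phi(e2) = a e2, a e5-coefficient 1
   in phi(e5), and finally e3-coefficient 1 in phi(e3) and e7-coefficient 1 in
   phi(e7).  The e3-coordinate of [phi e5, phi e7] = phi [e5, e7] then reads
   eps' = eps. *)

From mathcomp Require Import all_boot all_order all_algebra.
From mathcomp Require Import reals.
From mathcomp Require Import ring lra.
Set Implicit Arguments. Unset Strict Implicit. Unset Printing Implicit Defensive.
Import Order.TTheory GRing.Theory Num.Theory.
Local Open Scope ring_scope.

Lemma big_ord7 (V : nmodType) (F : 'I_7 -> V) : \sum_(i < 7) F i =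
  F (inord 0) + F (inord 1) + F (inord 2) + F (inord 3) + F (inord 4) + F (inord 5) + F (inord 6).
Proof.
rewrite !big_ord_recr big_ord0 /= add0r.
by do ![congr (_ + _) | congr F; apply/val_inj; rewrite /= inordK].
Qed.

Lemma inord_eq n (i j : nat) : (i <= n)%N -> (j <= n)%N ->
  ((inord i : 'I_n.+1) == inord j) = (i == j).
Proof. by move=> hi hj; apply/eqP/eqP => [h|->//]; rewrite -(inordK hi) -(inordK hj) h. Qed.

Section Coordinates.
Variable R : realType.
Implicit Types (E : R) (x y : vec R) (f g : nat -> R).

Definition coordf (i : nat) : nat -> R := fun m => (i == m)%:R.

Definition sum7f f : R := f 0 + f 1 + f 2 + f 3 + f 4 + f 5 + f 6.

Definition liebf E f g (k : nat) : R :=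
  let w i j := f i * g j - f j * g i in
  match k with
  | 0 => (1/2) * w 0 4 - (1/2) * w 1 5 - (1/2) * w 2 6 - w 3 5
  | 1 => - (1/2) * w 1 4 - w 3 4 - E * w 4 5 - Num.sqrt 2 * w 5 6
  | 2 => 2 * w 2 4 - E * w 4 6
  | 3 => -2 * w 4 5
  | 5 => - w 4 5
  | 6 => (3/2) * w 4 6
  | _ => 0
  end.

Definition ipf f g : R :=
  (f 0 * g 4 + f 4 * g 0) + (f 1 * g 5 + f 5 * g 1)
  + (f 2 * g 6 + f 6 * g 2) - f 3 * g 3.

Lemma eb_coord (i k : nat) : (i < 7)%N -> (k < 7)%N -> eb R i 0 (inord k) = coordf i k.
Proof. by move=> hi hk; rewrite /eb /ebase mxE eqxx inord_eq /= 1?eq_sym. Qed.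

Lemma eb_mulmx (i : nat) (A : 'M[R]_7) m : (i < 7)%N -> (eb R i *m A) 0 m = A (inord i) m.
Proof.
move=> hi; rewrite mxE (bigD1 (inord i)) //= big1 ?addr0.
  by rewrite /eb /ebase mxE !eqxx mul1r.
by move=> j hj; rewrite /eb /ebase mxE (negbTE hj) andbF mul0r.
Qed.

Lemma lieb_coord E x y f g k : (k < 7)%N ->
  (forall m, (m < 7)%N -> x 0 (inord m) = f m) ->
  (forall m, (m < 7)%N -> y 0 (inord m) = g m) ->
  lieb E x y 0 (inord k) = liebf E f g k.
Proof.
move=> hk hx hy; have sconstE i j : (i < 7)%N -> (j < 7)%N ->
    sconst E (inord i) (inord j) =
    if (i < j)%N then cpos E i j else if (j < i)%N then - cpos E j i else 0.
  by move=> hi hj; rewrite /sconst !inordK.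
rewrite /lieb !big_ord7 !mxE !sconstE //= !mxE !hx // !hy //.
by do 7?[case: k hk => [|k] hk]; rewrite /liebf ?inord_eq //=; ring.
Qed.

Lemma metric_iso_coords E E' (A : 'M[R]_7) :
  lie_iso_mx E E' A -> (forall x y : vec R, ip (x *m A) (y *m A) = ip x y) ->
  let X i m := A (inord i) (inord m) in
  (forall i j k, (i < 7)%N -> (j < 7)%N -> (k < 7)%N ->
     liebf E' (X i) (X j) k = sum7f (fun m => liebf E (coordf i) (coordf j) m * X m k)) /\
  (forall i j, (i < 7)%N -> (j < 7)%N -> ipf (X i) (X j) = ipf (coordf i) (coordf j)).
Proof.
move=> [_ A_lieb] A_ip X; split=> [i j k hi hj hk | i j hi hj].
  have X_row l : (l < 7)%N -> forall m, (m < 7)%N -> (eb R l *m A) 0 (inord m) = X l m.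
    by move=> hl m _; rewrite eb_mulmx.
  have e_coord l : (l < 7)%N -> forall m, (m < 7)%N -> eb R l 0 (inord m) = coordf l m.
    by move=> hl m; apply: eb_coord.
  have := congr1 (fun v : vec R => v 0 (inord k)) (A_lieb (eb R i) (eb R j)).
  rewrite /= (lieb_coord E' hk (X_row i hi) (X_row j hj)) => ->.
  by rewrite mxE big_ord7 !(lieb_coord E _ (e_coord i hi) (e_coord j hj)).
by have := A_ip (eb R i) (eb R j); rewrite /ip !eb_mulmx // !eb_coord.
Qed.

Definition shear_mx (c d : R) : 'M[R]_7 := \matrix_(i, j)
  if i == j :> nat then 1
  else if (i == 5 :> nat) && (j == 1 :> nat) then c
  else if (i == 6 :> nat) && (j == 2 :> nat) then d else 0.

Lemma shear_mxK c d : shear_mx c d *m shear_mx (- c) (- d) = 1%:M.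
Proof.
apply/matrixP => i j; rewrite -[i]inord_val -[j]inord_val.
have := ltn_ord i; have := ltn_ord j.
move: (nat_of_ord i) (nat_of_ord j) => a b hb ha.
rewrite !mxE big_ord7 !mxE inord_eq // !inordK //.
by do 7?[case: a ha => [|a] ha]; do 7?[case: b hb => [|b] hb] => //=; ring.
Qed.

(* With phi the shear, [e5, phi e6] = phi [e5, e6] reads eps' - c/2 = eps + c
   on e2, and [e5, phi e7] = phi [e5, e7] reads eps' + 2 d = eps - 3 d / 2 on e3. *)
Lemma lie_iso_shear E E' :
  lie_iso_mx E E' (shear_mx (2 * (E' - E) / 3) (2 * (E - E') / 7)).
Proof.
split; first by case: (mulmx1_unit (shear_mxK (2 * (E' - E) / 3) (2 * (E - E') / 7))).
move=> x y; apply/rowP => k; rewrite -[k]inord_val.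
have := ltn_ord k; move: (nat_of_ord k) => n hn.
pose cx : nat -> R := fun m => x 0 (inord m); pose cy : nat -> R := fun m => y 0 (inord m).
have coord_lieb l : (l < 7)%N -> lieb E x y 0 (inord l) = liebf E cx cy l.
  by move=> hl; apply: lieb_coord.
rewrite (lieb_coord E' hn (fun _ _ => erefl) (fun _ _ => erefl)) [in RHS]mxE big_ord7 !coord_lieb //.
do 7?[case: n hn => [|n] hn]; rewrite /liebf /cx /cy /= ?mxE ?big_ord7 ?mxE ?inordK //=.
all: by field.
Qed.

End Coordinates.

(* [X i m] stands for the m-th coordinate of the image of e_(i+1). *)
Section Rigidity.
Variables (R : realType) (E E' : R) (X : nat -> nat -> R).
Hypothesis X_lieb : forall i j k, (i < 7)%N -> (j < 7)%N -> (k < 7)%N ->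
  liebf E' (X i) (X j) k = sum7f (fun m => liebf E (coordf R i) (coordf R j) m * X m k).
Hypothesis X_ip : forall i j, (i < 7)%N -> (j < 7)%N ->
  ipf (X i) (X j) = ipf (coordf R i) (coordf R j).

Local Notation bracket i j k := (@X_lieb i j k isT isT isT).
Local Notation ortho i j := (@X_ip i j isT isT).

Let sqrt2_neq0 : Num.sqrt 2 != 0 :> R.
Proof. by rewrite gt_eqF // sqrtr_gt0 ltr0n. Qed.

Lemma e5coord_derived :
  [/\ X 0 4 = 0, X 1 4 = 0, X 2 4 = 0, X 6 4 = 0 & X 5 4 = -2 * X 3 4].
Proof.
have b044 := bracket 0 4 4; have b144 := bracket 1 4 4.
have b244 := bracket 2 4 4; have b464 := bracket 4 6 4.
have b454 := bracket 4 5 4.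
rewrite /liebf /sum7f /coordf /= in b044 b144 b244 b464 b454.
have e14 : X 1 4 = 0 by lra.
have e24 : X 2 4 = 0 by lra.
rewrite e14 e24 in b464 b454; split=> //; lra.
Qed.

Lemma image_e1_span : [/\ X 0 2 = 0, X 0 3 = 0, X 0 5 = 0 & X 0 6 = 0].
Proof.
have [_ _ e24 e64 _] := e5coord_derived.
have b262 := bracket 2 6 2; have b263 := bracket 2 6 3.
have b265 := bracket 2 6 5; have b266 := bracket 2 6 6.
rewrite /liebf /sum7f /coordf /= e24 e64 in b262 b263 b265 b266.
by split; lra.
Qed.

Lemma image_e2_span : [/\ X 1 2 = 0, X 1 3 = 0, X 1 5 = 0 & X 1 6 = 0].
Proof.
have [_ _ _ e64 e54] := e5coord_derived.
have [e02 e03 e05 e06] := image_e1_span.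
have b362 := bracket 3 6 2; have b562 := bracket 5 6 2.
have b363 := bracket 3 6 3; have b563 := bracket 5 6 3.
have b365 := bracket 3 6 5; have b565 := bracket 5 6 5.
have b366 := bracket 3 6 6; have b566 := bracket 5 6 6.
rewrite /liebf /sum7f /coordf /= e64 e54 e02 e03 e05 e06 in b362 b562 b363 b563 b365 b565 b366 b566.
by split; apply: (mulfI sqrt2_neq0); rewrite mulr0; lra.
Qed.

Lemma image_e1_e5 :
  [/\ X 0 0 = 1, X 0 1 = 0, X 1 0 = 0, X 4 4 = 1 & X 1 1 * X 5 5 = 1].
Proof.
have [e04 e14 _ _ _] := e5coord_derived.
have [e02 e03 e05 e06] := image_e1_span.
have [e12 e13 e15 e16] := image_e2_span.
have b040 := bracket 0 4 0; have b041 := bracket 0 4 1.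
have b140 := bracket 1 4 0; have b141 := bracket 1 4 1.
have i04 := ortho 0 4; have i14 := ortho 1 4; have i15 := ortho 1 5.
rewrite /liebf /ipf /sum7f /coordf /= e04 e14 e02 e03 e05 e06 e12 e13 e15 e16
  in b040 b041 b140 b141 i04 i14 i15.
have n44 : X 4 4 + 1 != 0.
  apply/eqP => h; have h44 : X 4 4 = -1 by lra.
  rewrite h44 in b141 i14; have e11 : X 1 1 = 0 by lra.
  rewrite e11 in i14 i15; have e10 : X 1 0 = 0 by lra.
  by rewrite e10 in i15; lra.
have e01 : X 0 1 = 0 by apply: (mulfI n44); rewrite mulr0; lra.
rewrite e01 in b040 i04; have e00 : X 0 0 = 1 by lra.
rewrite e00 in i04; have e44 : X 4 4 = 1 by lra.
rewrite e44 in b140 i14; have e10 : X 1 0 = 0 by lra.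
by rewrite e10 in i15; split=> //; lra.
Qed.

Lemma image_e2_perp :
  [/\ X 3 4 = 0, X 2 5 = 0, X 3 5 = 0, X 4 5 = 0 & X 6 5 = 0].
Proof.
have [e04 e14 e24 e64 _] := e5coord_derived.
have [e02 e03 e05 e06] := image_e1_span.
have [e12 e13 e15 e16] := image_e2_span.
have [e00 e01 e10 e44 e1155] := image_e1_e5.
have n11 : X 1 1 != 0 by apply/eqP => h; rewrite h mul0r in e1155; lra.
have i03 := ortho 0 3; have i12 := ortho 1 2; have i13 := ortho 1 3.
have i14 := ortho 1 4; have i16 := ortho 1 6.
rewrite /ipf /coordf /= e04 e14 e24 e64 e02 e03 e05 e06 e12 e13 e15 e16
  e00 e01 e10 e44 in i03 i12 i13 i14 i16.
by split; first lra; apply: (mulfI n11); rewrite mulr0; lra.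
Qed.

Lemma image_e3 : [/\ X 2 0 = 0, X 2 1 = 0, X 2 3 = 0 & X 2 6 = 0].
Proof.
have [_ _ e24 _ _] := e5coord_derived.
have [_ _ _ e44 _] := image_e1_e5.
have [_ e25 _ e45 _] := image_e2_perp.
have b240 := bracket 2 4 0; have b241 := bracket 2 4 1.
have b243 := bracket 2 4 3; have b245 := bracket 2 4 5.
have b246 := bracket 2 4 6; have i24 := ortho 2 4.
rewrite /liebf /ipf /sum7f /coordf /= e24 e44 e25 e45
  in b240 b241 b243 b245 b246 i24.
have e23 : X 2 3 = 0 by lra.
rewrite e23 in b240 b241 i24; have e21 : X 2 1 = 0 by lra.
have e26 : X 2 6 = 0 by lra.
by rewrite e21 e26 in b240 i24; split=> //; lra.
Qed.

Lemma image_e7 : [/\ X 6 3 = 0, X 2 2 * X 6 6 = 1, X 4 6 = 0 & X 6 2 = 0].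
Proof.
have [_ _ e24 e64 _] := e5coord_derived.
have [_ _ _ e44 _] := image_e1_e5.
have [_ e25 _ e45 e65] := image_e2_perp.
have [e20 e21 e23 e26] := image_e3.
have b463 := bracket 4 6 3; have b465 := bracket 4 6 5.
have i24 := ortho 2 4; have i26 := ortho 2 6; have i66 := ortho 6 6.
rewrite /liebf /ipf /sum7f /coordf /= e24 e64 e44 e25 e45 e65
  e20 e21 e23 e26 in b463 b465 i24 i26 i66.
have e63 : X 6 3 = 0 by lra.
rewrite e63 in i66; have e2266 : X 2 2 * X 6 6 = 1 by lra.
have n22 : X 2 2 != 0 by apply/eqP => h; rewrite h mul0r in e2266; lra.
have n66 : X 6 6 != 0 by apply/eqP => h; rewrite h mulr0 in e2266; lra.
split=> //; first by apply: (mulfI n22); rewrite mulr0; lra.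
by apply: (mulfI n66); rewrite mulr0; lra.
Qed.

Lemma image_e4 : [/\ X 3 2 = 0, X 3 6 = 0, X 3 3 * X 3 3 = 1 & X 3 3 * X 5 5 = 1].
Proof.
have [_ _ e24 e64 e54] := e5coord_derived.
have [_ e13 _ _] := image_e2_span.
have [_ _ _ e44 e1155] := image_e1_e5.
have [e34 e25 e35 e45 e65] := image_e2_perp.
have [e20 e21 e23 e26] := image_e3.
have [e63 e2266 e46 e62] := image_e7.
have b341 := bracket 3 4 1; have b453 := bracket 4 5 3.
have i23 := ortho 2 3; have i33 := ortho 3 3.
have i35 := ortho 3 5; have i36 := ortho 3 6.
rewrite /liebf /ipf /sum7f /coordf /= e54 e24 e64 e13 e44
  e34 e25 e35 e45 e65 e20 e21 e23 e26 e63 e46 e62 in b341 b453 i23 i33 i35 i36.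
have n22 : X 2 2 != 0 by apply/eqP => h; rewrite h mul0r in e2266; lra.
have n66 : X 6 6 != 0 by apply/eqP => h; rewrite h mulr0 in e2266; lra.
have e32 : X 3 2 = 0 by apply: (mulfI n66); rewrite mulr0; lra.
have e36 : X 3 6 = 0 by apply: (mulfI n22); rewrite mulr0; lra.
have e31 : X 3 1 = 2 * X 1 1 - 2 * X 3 3 by lra.
have e53 : X 5 3 = 2 * X 5 5 - 2 * X 3 3 by lra.
rewrite e32 e36 in i33; rewrite e31 e53 in i35.
have e3333 : X 3 3 * X 3 3 = 1 by lra.
split=> //; nra.
Qed.

Lemma isometric_coords_param_eq : E = E'.
Proof.
have [_ _ _ e64 e54] := e5coord_derived.
have [e12 _ _ _] := image_e2_span.
have [_ _ _ e44 e1155] := image_e1_e5.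
have [e34 _ _ _ e65] := image_e2_perp.
have [e63 e2266 e46 e62] := image_e7.
have [_ _ e3333 e3355] := image_e4.
have b462 := bracket 4 6 2; have b561 := bracket 5 6 1.
rewrite /liebf /sum7f /coordf /= e54 e34 e64 e12 e44
  e65 e63 e46 e62 in b462 b561.
have e5566 : X 5 5 * X 6 6 = X 1 1.
  by apply: (mulfI sqrt2_neq0); lra.
have n55 : X 5 5 != 0 by apply/eqP => h; rewrite h mulr0 in e1155; lra.
have e11 : X 1 1 = X 3 3 by apply: (mulIf n55); lra.
have e66 : X 6 6 = 1.
  by rewrite -[X 6 6]mul1r -e3355 -mulrA e5566 e11 e3333.
have e22 : X 2 2 = 1 by rewrite e66 mulr1 in e2266.
by rewrite e22 e66 in b462; lra.
Qed.

End Rigidity.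

Theorem mainTheorem15 (R : realType) (eps eps' : R) :
  lie_isomorphic eps eps' /\ (metric_lie_isomorphic eps eps' <-> eps = eps').
Proof.
split; first by eexists; exact: lie_iso_shear.
split=> [[A [A_iso A_ip]] | <-].
  have [X_lieb X_ip] := metric_iso_coords A_iso A_ip.
  exact: isometric_coords_param_eq X_lieb X_ip.
exists 1%:M; split; last by move=> x y; rewrite !mulmx1.
by split=> [|x y]; rewrite ?unitmx1 // !mulmx1.
Qed.
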